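(* Consider the following setting. Let $x_1,\ldots,x_n$ be points of a set $\mathcal X$, $g:\mathcal X\to\mathbb R$, and $Y_i=g(x_i)+\varepsilon_i$, $i=1,\ldots,n$, with $(\varepsilon_i)$ i.i.d. real random variables. Let $\rho:\mathbb R\to[0,\infty)$ be convex with $\rho(0)=0$, and for $U\subset\mathcal X$ let $m(Y_i,\,x_i\in U)$ be a selected minimizer over $\mu\in\mathbb R$ of $\sum_{i:x_i\in U}\rho(Y_i-\mu)$. Assume the following monotonicity property (Assumption M): for any set $S$ and any partition $S=\bigcup_jS_j$ into pairwise disjoint sets $S_j$, and any realisation of the data, $\min_j m(Y_i,\,x_i\in S_j)\le m(Y_i,\,x_i\in S)\le\max_j m(Y_i,\,x_i\in S_j)$. Let $U_0\subset U_1\subset\cdots\subset U_K$ be nested subsets of $\mathcal X$, $\tilde\theta_k:=m(Y_i,\,x_i\in U_k)$ and $\tilde\theta_{(k+1)\setminus k}:=m(Y_i,\,x_i\in U_{k+1}\setminus U_k)$. Fix $r\ge1$ and define $s_j$, $s_{kj}$, the critical values $z_0,\ldots,z_{K-1}>0$, $z_K:=1$, the selected index $\hat k$ and $\hat\theta:=\tilde\theta_{\hat k}$ as in the context. Then for every $k=0,\ldots,K-1$ and every realisation of the data, \[\big|\hat\theta-\tilde\theta_k\big|\,\mathbf 1(\hat k>k)\le\max_{j=k+1,\ldots,K-1}\big(z_ks_{jk}+z_{j+1}s_{j+1}\big).\]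
   Context: $\mathbb E_0$ denotes expectation under the model with $g\equiv0$ (i.e. $Y_i=\varepsilon_i$), and the stochastic error levels are $s_j:=\mathbb E_0[|\tilde\theta_j|^r]^{1/r}$ and $s_{kj}:=\mathbb E_0[|\tilde\theta_{(k+1)\setminus k}-\tilde\theta_j|^r]^{1/r}$ for $0\le j\le k\le K-1$ (assumed finite). Given critical values $z_0,\ldots,z_{K-1}>0$ and $z_K:=1$, the selected index is \[\hat k:=\inf\Big\{k\in\{0,\ldots,K-1\}\,\Big|\,\exists j\le k:\ |\tilde\theta_{(k+1)\setminus k}-\tilde\theta_j|>z_js_{kj}+z_{k+1}s_{k+1}\Big\}\wedge K\] (with $\inf\emptyset=\infty$), i.e. $k$ is increased sequentially from $0$ as long as all these tests are passed. *)

From HB Require Import structures.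
From mathcomp Require Import all_boot all_order all_algebra.
From mathcomp Require Import all_classical all_reals all_analysis.
Set Implicit Arguments. Unset Strict Implicit. Unset Printing Implicit Defensive.
Import Order.TTheory GRing.Theory Num.Theory.
Local Open Scope classical_set_scope.
Local Open Scope ring_scope.

Definition rho_convex (R : realType) (rho : R -> R) : Prop :=
  forall a b t : R, 0 <= t <= 1 ->
    rho (t * a + (1 - t) * b) <= t * rho a + (1 - t) * rho b.

Definition sample (X : Type) (n : nat) (x : 'I_n -> X) (U : set X) : pred 'I_n :=
  fun i => `[< U (x i) >].

Definition is_selected_minimizer (R : realType) (n : nat) (rho : R -> R)
  (m : pred 'I_n -> ('I_n -> R) -> R) : Prop :=
  forall (I : pred 'I_n) (Y : 'I_n -> R) (mu : R),
    \sum_(i | I i) rho (Y i - m I Y) <= \sum_(i | I i) rho (Y i - mu).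

Definition assumption_M (R : realType) (X : Type) (n : nat) (x : 'I_n -> X)
  (m : pred 'I_n -> ('I_n -> R) -> R) : Prop :=
  forall (S : set X) (p : nat) (Sp : 'I_p.+1 -> set X),
    (forall a b, a != b -> Sp a `&` Sp b = set0) ->
    S = \bigcup_a Sp a ->
    forall Y : 'I_n -> R,
      (exists a, m (sample x (Sp a)) Y <= m (sample x S) Y) /\
      (exists b, m (sample x S) Y <= m (sample x (Sp b)) Y).

Definition iid_family (d : measure_display) (T : measurableType d) (R : realType)
  (P : probability T R) (n : nat) (eps : 'I_n -> T -> R) : Prop :=
  [/\ (forall i, measurable_fun setT (eps i)),
      (forall i j (A : set R), measurable A ->
          P (eps i @^-1` A) = P (eps j @^-1` A)) &
      (forall (J : {set 'I_n}) (A : 'I_n -> set R), (forall i, measurable (A i)) ->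
          P [set w | forall i, i \in J -> A i (eps i w)] =
          (\prod_(i in J) P (eps i @^-1` A i))%E)].

(* r-th moment of f(data) under the model g = 0 (data Y_i = eps_i) *)
Definition null_moment (d : measure_display) (T : measurableType d) (R : realType)
  (P : probability T R) (n : nat) (eps : 'I_n -> T -> R)
  (f : ('I_n -> R) -> R) (r : R) : \bar R :=
  (\int[P]_w ((`|f (fun i => eps i w)| `^ r)%:E))%E.

Definition err_level (d : measure_display) (T : measurableType d) (R : realType)
  (P : probability T R) (n : nat) (eps : 'I_n -> T -> R)
  (f : ('I_n -> R) -> R) (r : R) : R :=
  (fine (null_moment P eps f r)) `^ r^-1.

(* selected index: smallest k < K failing a test, else K *)
Definition khat (R : realType) (K : nat) (z s1 : nat -> R) (s2 : nat -> nat -> R)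
  (th thd : nat -> R) : nat :=
  find (fun k => [exists j : 'I_k.+1,
                   z j * s2 k j + z k.+1 * s1 k.+1 < `|thd k - th j|])
       (iota 0 K).

From HB Require Import structures.
From mathcomp Require Import all_boot all_order all_algebra.
From mathcomp Require Import all_classical all_reals all_analysis.
From mathcomp Require Import lra zify.

Set Implicit Arguments.
Unset Strict Implicit.
Unset Printing Implicit Defensive.
Import Order.TTheory GRing.Theory Num.Theory.
Local Open Scope classical_set_scope.
Local Open Scope ring_scope.

(* If k^ > k, then U_k^ is partitioned into U_k and the layers U_(j+1) \ U_j,
   k <= j < k^.  By Assumption M, theta^ lies between the smallest and the
   largest estimate on these pieces, so its distance to theta~_k is at most the
   distance of one of them to theta~_k.  That distance is 0 for U_k itself, and
   for the layer j it is bounded by the test at step j, which was passed since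
   j < k^. *)

Section Layers.
Variables (X : Type) (U : nat -> set X) (N : nat).

Definition layer (k a : nat) : set X :=
  if a is a'.+1 then U (k + a').+1 `\` U (k + a') else U k.

Hypothesis U_nested : forall i, (i < N)%N -> U i `<=` U i.+1.

Lemma nested_sub i j : (i <= j <= N)%N -> U i `<=` U j.
Proof.
case/andP=> /subnKC <-; elim: (j - i)%N => [|t IH] jN; first by rewrite addn0.
rewrite addnS => y /(IH ltac:(lia)) yU; apply: U_nested => //; lia.
Qed.

Lemma layer_sub k a : (k + a <= N)%N -> layer k a `<=` U (k + a).
Proof.
case: a => [|a] kaN; first by rewrite addn0.
by rewrite addnS => y [].
Qed.

Lemma layer_disjoint k p : (k + p <= N)%N ->
  forall a b : 'I_p.+1, a != b -> layer k a `&` layer k b = set0.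
Proof.
move=> kpN a b neq_ab; wlog ab : a b neq_ab / (a < b)%N.
  move=> wlog_ab; case: (ltngtP a b) => [ab|ba|/val_inj eq_ab].
  - exact: wlog_ab.
  - by rewrite setIC wlog_ab // eq_sym.
  - by rewrite eq_ab eqxx in neq_ab.
case: b neq_ab ab => -[//|b] /= bp _ ab.
apply/seteqP; split=> y // [ya [_]]; apply.
apply: (@nested_sub (k + a) (k + b)); first lia.
by apply: layer_sub ya; lia.
Qed.

Lemma layer_cover k t y : U (k + t) y -> exists2 a, (a <= t)%N & layer k a y.
Proof.
elim: t => [|t IH] yU; first by exists 0%N; rewrite // -(addn0 k).
have [yt|nyt] := pselect (U (k + t) y).
  by have [a at_ ya] := IH yt; exists a => //; apply: leqW.
by exists t.+1 => //; split=> //; rewrite -addnS.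
Qed.

Lemma bigcup_layer k p : (k + p <= N)%N ->
  U (k + p) = \bigcup_(a : 'I_p.+1) layer k a.
Proof.
move=> kpN; apply/seteqP; split=> y.
  by case/layer_cover=> a ap ya; exists (Ordinal (ap : (a < p.+1)%N)).
case=> a _ ya; have := ltn_ord a => ap.
by apply: (@nested_sub (k + a) (k + p)); [lia | apply: layer_sub ya; lia].
Qed.

End Layers.

Lemma assumption_M_dist_le (R : realType) (X : Type) (n : nat) (x : 'I_n -> X)
    (m : pred 'I_n -> ('I_n -> R) -> R) (S : set X) (p : nat)
    (Sp : 'I_p.+1 -> set X) (Y : 'I_n -> R) (c : R) :
  assumption_M x m ->
  (forall a b, a != b -> Sp a `&` Sp b = set0) -> S = \bigcup_a Sp a ->
  exists a, `|m (sample x S) Y - c| <= `|m (sample x (Sp a)) Y - c|.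
Proof.
move=> HM disj cover; have [[a Ha] [b Hb]] := HM S p Sp disj cover Y.
have [cS|Sc] := leP c (m (sample x S) Y).
  exists b; rewrite ger0_norm ?subr_ge0 //.
  by apply: le_trans (ler_norm _); rewrite lerD2r.
exists a; rewrite ltr0_norm ?subr_lt0 // distrC.
by apply: le_trans (ler_norm _); rewrite opprB lerD2l lerN2.
Qed.

Section SelectedIndex.
Variables (R : realType) (K : nat) (z s1 : nat -> R) (s2 : nat -> nat -> R).
Variables (th thd : nat -> R).

Local Notation kh := (khat K z s1 s2 th thd).

Lemma khat_le : (kh <= K)%N.
Proof. by rewrite /khat (leq_trans (find_size _ _)) // size_iota. Qed.

Lemma khat_test_passed j i : (i <= j)%N -> (j < kh)%N ->
  `|thd j - th i| <= z i * s2 j i + z j.+1 * s1 j.+1.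
Proof.
move=> ij jkh; have := before_find 0%N jkh.
rewrite nth_iota ?add0n; last by have := khat_le; lia.
by move/negbT/existsPn/(_ (Ordinal (ij : (i < j.+1)%N))); rewrite -leNgt.
Qed.

End SelectedIndex.

Lemma err_level_ge0 (d : measure_display) (T : measurableType d) (R : realType)
    (P : probability T R) (n : nat) (eps : 'I_n -> T -> R)
    (f : ('I_n -> R) -> R) (r : R) :
  0 <= err_level P eps f r.
Proof. exact: powR_ge0. Qed.

Theorem proposition3p4 (R : realType) (d : measure_display) (T : measurableType d)
  (P : probability T R) (X : Type) (n : nat) (x : 'I_n -> X) (g : X -> R)
  (eps : 'I_n -> T -> R) (rho : R -> R) (m : pred 'I_n -> ('I_n -> R) -> R)
  (K : nat) (U : nat -> set X) (r : R) (z : nat -> R) :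
  iid_family P eps ->
  (forall t, 0 <= rho t) -> rho 0 = 0 -> rho_convex rho ->
  is_selected_minimizer rho m ->
  assumption_M x m ->
  (forall k, (k < K)%N -> U k `<=` U k.+1) ->
  1 <= r ->
  (forall j, (j <= K)%N ->
     (null_moment P eps (m (sample x (U j))) r < +oo)%E) ->
  (forall k j, (j <= k < K)%N ->
     (null_moment P eps
        (fun Y => (m (sample x (U k.+1 `\` U k)) Y - m (sample x (U j)) Y)%R) r
      < +oo)%E) ->
  (forall j, (j < K)%N -> 0 < z j) -> z K = 1 ->
  let s1 := fun j => err_level P eps (m (sample x (U j))) r in
  let s2 := fun k j => err_level P eps
        (fun Y => m (sample x (U k.+1 `\` U k)) Y - m (sample x (U j)) Y) r in
  forall w : T,
  let Y := fun i => g (x i) + eps i w in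
  let th := fun k => m (sample x (U k)) Y in
  let thd := fun k => m (sample x (U k.+1 `\` U k)) Y in
  let kh := khat K z s1 s2 th thd in
  let theta_hat := th kh in
  forall k, (k < K)%N ->
  exists2 j, (k <= j < K)%N &
    `|theta_hat - th k| * (k < kh)%N%:R <= z k * s2 j k + z j.+1 * s1 j.+1.
Proof.
move=> _ _ _ _ _ HM U_nested _ _ _ z_gt0 zK s1 s2 w Y th thd kh theta_hat k kK.
have z_ge0 j : (j <= K)%N -> 0 <= z j.
  by rewrite leq_eqVlt => /orP[/eqP->|/z_gt0/ltW//]; rewrite zK.
have bound_kk : 0 <= z k * s2 k k + z k.+1 * s1 k.+1.
  by rewrite addr_ge0 // mulr_ge0 ?z_ge0 ?err_level_ge0 // ltnW.
have khK : (kh <= K)%N := khat_le K z s1 s2 th thd.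
have [khk|kkh] := leqP kh k; first by exists k; rewrite ?leqnn ?mulr0.
rewrite mulr1; pose p := (kh - k)%N.
have kpK : (k + p <= K)%N by rewrite subnKC // ltnW.
have cover : U kh = \bigcup_(a : 'I_p.+1) layer U k a.
  by rewrite -(bigcup_layer U_nested kpK) subnKC // ltnW.
have [[[|a] ap] /= le_dist] :=
  assumption_M_dist_le Y (th k) HM (layer_disjoint U_nested kpK) cover.
  by exists k; rewrite ?leqnn //; apply: le_trans le_dist _; rewrite subrr normr0.
exists (k + a)%N; first lia.
apply: le_trans le_dist (khat_test_passed (K := K) (thd := thd) _ _).
  exact: leq_addr.
by move: ap; rewrite /p; lia.
Qed.
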